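(* Let $\Gamma$ be a green Veldkamp quadrangle with point set $P$ and let $a,b\in P$. Then (i) $a\simeq b$ if and only if $a^{\rm op}=b^{\rm op}$; (ii) if $a\simeq b$, then $\Gamma_2(a)=\Gamma_2(b)$. In particular $\simeq$ is an equivalence relation on $P$.
   Context: A graph is a pair $(V,E)$ with $E$ a set of $2$-element subsets of $V$; $\Gamma_v$ is the set of neighbors of $v$; $\Gamma_m(v)=\{u\mid{\rm dist}(u,v)=m\}$. An $s$-path is a sequence $(x_0,\dots,x_s)$ of vertices with consecutive vertices adjacent and $x_{i-2}\ne x_i$ for $i\in[2,s]$. A closed $s$-path is an $s$-path with $s\ge3$ whose first and last vertices coincide; an $s$-circuit is the subgraph determined by a closed $s$-path. An opposition relation on a set $X$ is a symmetric anti-reflexive relation; trivial if any two distinct elements are related; $k$-plump if for every $S\subseteq X$ with $|S|\le k$ some element of $X$ is related to all elements of $S$. A Veldkamp graph is a graph with a $2$-plump opposition relation $\equiv_v$ on $\Gamma_v$ for each vertex $v$. A path $(v_0,\dots,v_s)$ is straight if $v_{i-1}\equiv_{v_i}v_{i+1}$ for all $i\in[1,s-1]$; a circuit is straight if every path in it is straight. A Veldkamp $n$-gon ($n\ge2$) is a Veldkamp graph satisfying (VP1) connected and bipartite; (VP2) for each $k\in[1,n-1]$ each straight $k$-path is the unique straight path between its endpoints of length at most $k$; (VP3) every straight $(n+1)$-path lies in a straight $2n$-circuit. A root is a straight $n$-path; two vertices are opposite if there is a root between them; $x^{\rm op}$ is the set of vertices opposite $x$. A Veldkamp quadrangle is a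 Veldkamp $4$-gon, with bipartition classes called points $P$ and lines $L$; it is green if $\equiv_x$ is trivial for every line $x$. A weed is a non-straight $4$-path $(a,x,b,y,c)$ with $a,b,c\in P$ and ${\rm dist}(a,c)=4$. For $a,b\in P$, write $a\simeq b$ if $a=b$ or there is a weed beginning at $a$ and ending at $b$. *)

From Stdlib Require Import List Arith Relations.
Import ListNotations.

Set Implicit Arguments.

(* A graph (V, E): E a set of 2-subsets = symmetric irreflexive adjacency. *)
Definition is_graph (V : Type) (adj : V -> V -> Prop) : Prop :=
  (forall x y, adj x y -> adj y x) /\ (forall x, ~ adj x x).

(* A sequence (x_0, x_1, ..., x_s) is represented by its head x_0 and tail
   [x_1; ...; x_s]; s = length of the tail, last vertex = last tail x_0. *)
Fixpoint chain (V : Type) (R : V -> V -> Prop) (x : V) (l : list V) : Prop :=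
  match l with
  | [] => True
  | y :: l' => R x y /\ chain R y l'
  end.

Fixpoint nobacktrack (V : Type) (x : V) (l : list V) : Prop :=
  match l with
  | y :: ((z :: _) as l') => x <> z /\ nobacktrack y l'
  | _ => True
  end.

Definition is_path (V : Type) (adj : V -> V -> Prop) (x : V) (l : list V) : Prop :=
  chain adj x l /\ nobacktrack x l.

(* straightness: v_{i-1} ≡_{v_i} v_{i+1} for i in [1, s-1];
   opp v is the opposition relation on Γ_v *)
Fixpoint straight (V : Type) (opp : V -> V -> V -> Prop) (x : V) (l : list V) : Prop :=
  match l with
  | y :: ((z :: _) as l') => opp y x z /\ straight opp y l'
  | _ => True
  end.

Definition dist_eq (V : Type) (adj : V -> V -> Prop) (u v : V) (m : nat) : Prop :=
  (exists l, chain adj u l /\ last l u = v /\ length l = m) /\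
  (forall l, chain adj u l -> last l u = v -> m <= length l).

Definition Gamma_m (V : Type) (adj : V -> V -> Prop) (m : nat) (v u : V) : Prop :=
  dist_eq adj u v m.

Definition opposition_on (V : Type) (adj : V -> V -> Prop) (opp : V -> V -> V -> Prop) (v : V) : Prop :=
  (forall u w, opp v u w -> adj v u /\ adj v w) /\
  (forall u w, opp v u w -> opp v w u) /\
  (forall u, ~ opp v u u).

Definition plump (V : Type) (adj : V -> V -> Prop) (opp : V -> V -> V -> Prop) (k : nat) (v : V) : Prop :=
  forall S : list V, (forall x, In x S -> adj v x) -> length S <= k ->
    exists z, adj v z /\ forall x, In x S -> opp v z x.

Definition veldkamp_graph (V : Type) (adj : V -> V -> Prop) (opp : V -> V -> V -> Prop) : Prop :=
  is_graph adj /\ forall v, opposition_on adj opp v /\ plump adj opp 2 v.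

Definition connected (V : Type) (adj : V -> V -> Prop) : Prop :=
  forall u v, clos_refl_trans V adj u v.

Definition bipartition_class (V : Type) (adj : V -> V -> Prop) (pt : V -> Prop) : Prop :=
  forall x y, adj x y -> (pt x <-> ~ pt y).

Definition bipartite (V : Type) (adj : V -> V -> Prop) : Prop :=
  exists pt : V -> Prop, bipartition_class adj pt.

Definition closed_path (V : Type) (adj : V -> V -> Prop) (s : nat) (x : V) (l : list V) : Prop :=
  is_path adj x l /\ length l = s /\ 3 <= s /\ last l x = x.

(* edges / vertices of the subgraph (circuit) determined by the sequence x::l *)
Definition circ_edge (V : Type) (x : V) (l : list V) (u w : V) : Prop :=
  In (u, w) (combine (x :: l) l) \/ In (w, u) (combine (x :: l) l).

Definition circ_vertex (V : Type) (x : V) (l : list V) (u : V) : Prop := In u (x :: l).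

Definition path_in_circuit (V : Type) (x : V) (l : list V) (y : V) (m : list V) : Prop :=
  circ_vertex x l y /\ chain (circ_edge x l) y m.

Definition straight_circuit (V : Type) (opp : V -> V -> V -> Prop) (x : V) (l : list V) : Prop :=
  forall y m, path_in_circuit x l y m -> nobacktrack y m -> straight opp y m.

Definition VP2 (V : Type) (adj : V -> V -> Prop) (opp : V -> V -> V -> Prop) (n : nat) : Prop :=
  forall k, 1 <= k <= n - 1 ->
  forall x l, is_path adj x l -> length l = k -> straight opp x l ->
  forall l', is_path adj x l' -> straight opp x l' -> length l' <= k ->
    last l' x = last l x -> l' = l.

Definition VP3 (V : Type) (adj : V -> V -> Prop) (opp : V -> V -> V -> Prop) (n : nat) : Prop :=
  forall x l, is_path adj x l -> length l = n + 1 -> straight opp x l ->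
  exists c cl, closed_path adj (2 * n) c cl /\ straight_circuit opp c cl /\
    path_in_circuit c cl x l.

Definition veldkamp_ngon (V : Type) (adj : V -> V -> Prop) (opp : V -> V -> V -> Prop) (n : nat) : Prop :=
  2 <= n /\ veldkamp_graph adj opp /\ connected adj /\ bipartite adj /\
  VP2 adj opp n /\ VP3 adj opp n.

(* Veldkamp quadrangle with chosen bipartition class of points pt (lines = ~ pt) *)
Definition veldkamp_quadrangle (V : Type) (adj : V -> V -> Prop) (opp : V -> V -> V -> Prop)
  (pt : V -> Prop) : Prop :=
  veldkamp_ngon adj opp 4 /\ bipartition_class adj pt.

Definition green (V : Type) (adj : V -> V -> Prop) (opp : V -> V -> V -> Prop) (pt : V -> Prop) : Prop :=
  forall x, ~ pt x -> forall u w, adj x u -> adj x w -> u <> w -> opp x u w.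

Definition opposite (V : Type) (adj : V -> V -> Prop) (opp : V -> V -> V -> Prop) (n : nat) (x y : V) : Prop :=
  exists l, is_path adj x l /\ length l = n /\ straight opp x l /\ last l x = y.

Definition weed (V : Type) (adj : V -> V -> Prop) (opp : V -> V -> V -> Prop) (pt : V -> Prop)
  (a x b y c : V) : Prop :=
  is_path adj a [x; b; y; c] /\ ~ straight opp a [x; b; y; c] /\
  pt a /\ pt b /\ pt c /\ dist_eq adj a c 4.

Definition simeq (V : Type) (adj : V -> V -> Prop) (opp : V -> V -> V -> Prop) (pt : V -> Prop)
  (a b : V) : Prop :=
  a = b \/ exists x m y, weed adj opp pt a x m y b.

From Stdlib Require Import List Arith Relations Lia Classical.
Import ListNotations.

(* Since every line is green, a root a x p y z from a point a is just a
   non-backtracking 4-path with x and y opposite at the point p ([root4]).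
   The central tool is the rotation lemma [root4_turn]: a root from a to z
   can be made to start with any prescribed line through a.  One rotation
   step extends the root to a straight 5-path, places it in a straight
   8-circuit by (VP3), and reads off the closing arc; this needs that the
   eight vertices of a straight 8-circuit are distinct (section
   StraightOctagon).  From rotation we get that opposite points are never
   collinear, that a weed can be turned around its end point
   ([weed_turn]), and hence that opposites and distance-2 neighbours are
   transferred along weeds.  Conversely, equal opposite sets produce a weed
   ([simeq_of_same_opposites]).  Reflexivity, symmetry and transitivity of
   the weed relation then follow from part (i). *)

Lemma circ_edge_adj {V : Type} (adj : V -> V -> Prop) (x : V) (l : list V) :
  (forall u w, adj u w -> adj w u) -> chain adj x l ->
  forall u w, circ_edge x l u w -> adj u w.
Proof.
  intros Hsym Hch u w Hedge.
  enough (Hdir : forall u w, In (u, w) (combine (x :: l) l) -> adj u w)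
    by (destruct Hedge as [H | H]; auto).
  clear u w Hedge. revert x Hch.
  induction l as [|y l IH]; intros x Hch u w Hin; simpl in Hin; [contradiction|].
  destruct Hch as [Hxy Hch].
  destruct Hin as [[= <- <-] | Hin]; [exact Hxy | exact (IH y Hch u w Hin)].
Qed.

Ltac abstract_mod8 x :=
  pose proof (Nat.div_mod_eq x 8); pose proof (Nat.mod_upper_bound x 8 ltac:(discriminate));
  let r := fresh "r" in let q := fresh "q" in
  set (r := x mod 8) in *; set (q := x / 8) in *; clearbody r q.

Ltac mod8_lia :=
  repeat match goal with
  | _ : context [?x mod 8] |- _ => abstract_mod8 x
  | |- context [?x mod 8] => abstract_mod8 x
  end; lia.

Lemma mod8_cases (k : nat) :
  k mod 8 = 0 \/ k mod 8 = 1 \/ k mod 8 = 2 \/ k mod 8 = 3 \/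
  k mod 8 = 4 \/ k mod 8 = 5 \/ k mod 8 = 6 \/ k mod 8 = 7.
Proof. pose proof (Nat.mod_upper_bound k 8). lia. Qed.

Ltac in_list := unfold circ_vertex; simpl; solve [repeat (first [left; reflexivity | right])].
Ltac circ_edge_in := unfold circ_edge; first [left; in_list | right; in_list].

Section Quadrangle.

Context {V : Type} {adj : V -> V -> Prop} {opp : V -> V -> V -> Prop} {pt : V -> Prop}.
Hypothesis HQ : veldkamp_quadrangle adj opp pt.

Lemma adj_sym {x y : V} : adj x y -> adj y x.
Proof. destruct HQ as [[_ [[[Hs _] _] _]] _]. exact (Hs x y). Qed.

Lemma opp_adj {v u w : V} : opp v u w -> adj v u /\ adj v w.
Proof. destruct HQ as [[_ [[_ H] _]] _]. apply (H v). Qed.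

Lemma opp_sym {v u w : V} : opp v u w -> opp v w u.
Proof. destruct HQ as [[_ [[_ H] _]] _]. apply (H v). Qed.

Lemma opp_irrefl {v u : V} : ~ opp v u u.
Proof. destruct HQ as [[_ [[_ H] _]] _]. apply (H v). Qed.

Lemma bipartite_flip {x y : V} : adj x y -> (pt x <-> ~ pt y).
Proof. destruct HQ as [_ H]. exact (H x y). Qed.

Lemma straight_unique : VP2 adj opp 4.
Proof. destruct HQ as [[_ [_ [_ [_ [H _]]]]] _]. exact H. Qed.

Lemma straight_in_circuit : VP3 adj opp 4.
Proof. destruct HQ as [[_ [_ [_ [_ [_ H]]]]] _]. exact H. Qed.

Lemma parity_flip {x y : V} : adj x y -> (pt y <-> ~ pt x).
Proof.
  intros Hxy. pose proof (bipartite_flip Hxy). destruct (classic (pt y)); tauto.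
Qed.

Lemma exists_neighbour (v : V) : exists z, adj v z.
Proof.
  destruct HQ as [[_ [[_ H] _]] _].
  destruct (proj2 (H v) [] ltac:(contradiction) ltac:(simpl; lia)) as [z [Hz _]].
  eauto.
Qed.

Lemma common_opposite {v x y : V} :
  adj v x -> adj v y -> exists z, adj v z /\ opp v z x /\ opp v z y.
Proof.
  intros Hx Hy. destruct HQ as [[_ [[_ H] _]] _].
  assert (HS : forall u, In u [x; y] -> adj v u) by (intros u [<- | [<- | []]]; auto).
  destruct (proj2 (H v) [x; y] HS ltac:(simpl; lia)) as [z [Hz Hopp]].
  exists z; repeat split; auto; apply Hopp; in_list.
Qed.

Lemma opposite_neighbour {v x : V} : adj v x -> exists z, adj v z /\ opp v z x.
Proof.
  intros Hx. destruct (common_opposite Hx Hx) as [z [Hz [Hopp _]]]. eauto.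
Qed.

Section StraightOctagon.

Variables c v1 v2 v3 v4 v5 v6 v7 : V.
Local Notation cl := [v1; v2; v3; v4; v5; v6; v7; c].
Hypothesis Hpath : is_path adj c cl.
Hypothesis Hstraight : straight_circuit opp c cl.

Definition vtx (k : nat) : V := nth (k mod 8) [c; v1; v2; v3; v4; v5; v6; v7] c.

Lemma vtx_mod (i j : nat) : i mod 8 = j mod 8 -> vtx i = vtx j.
Proof. unfold vtx. intros ->. reflexivity. Qed.

Lemma vtx_edge (k : nat) : circ_edge c cl (vtx k) (vtx (1 + k)).
Proof.
  unfold vtx. rewrite (Nat.Div0.add_mod 1 k 8).
  destruct (mod8_cases k) as [H|[H|[H|[H|[H|[H|[H|H]]]]]]]; rewrite H; simpl; circ_edge_in.
Qed.

Lemma vtx_adj (k : nat) : adj (vtx k) (vtx (1 + k)).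
Proof. eapply circ_edge_adj; [exact @adj_sym | exact (proj1 Hpath) | apply vtx_edge]. Qed.

Lemma vtx_in (k : nat) : circ_vertex c cl (vtx k).
Proof.
  unfold circ_vertex, vtx.
  destruct (mod8_cases k) as [H|[H|[H|[H|[H|[H|[H|H]]]]]]]; rewrite H; in_list.
Qed.

(* The only distance-2 coincidence not excluded by the absence of
   backtracking is v7 = v1 (around c); two straight 3-paths from v4 exclude it. *)
Lemma octagon_wrap : v7 <> v1.
Proof.
  destruct Hpath as [Hch Hnb]. simpl in Hch, Hnb.
  destruct Hch as [A1 [A2 [A3 [A4 [A5 [A6 [A7 _]]]]]]].
  destruct Hnb as [N0 [N1 [N2 [N3 [N4 [N5 _]]]]]].
  intros E.
  assert (Hfwd : straight opp v4 [v5; v6; v7]).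
  { apply Hstraight; [split; [in_list | simpl; repeat split; circ_edge_in]
                     | simpl; repeat split; congruence]. }
  assert (Hbwd : straight opp v4 [v3; v2; v1]).
  { apply Hstraight; [split; [in_list | simpl; repeat split; circ_edge_in]
                     | simpl; repeat split; congruence]. }
  assert (Heq : [v3; v2; v1] = [v5; v6; v7]).
  { apply (straight_unique 3 ltac:(lia) v4); auto; simpl; try lia.
    - split; simpl; [repeat split; auto | repeat split; congruence].
    - split; simpl; [repeat split; apply adj_sym; auto | repeat split; congruence]. }
  injection Heq; intros; congruence.
Qed.

Lemma vtx_ne2 (k : nat) : vtx k <> vtx (2 + k).
Proof.
  rewrite (vtx_mod k (k mod 8)), (vtx_mod (2 + k) (2 + k mod 8)) by mod8_lia.
  pose proof octagon_wrap as Hwrap.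
  destruct Hpath as [_ Hnb]. simpl in Hnb.
  destruct Hnb as [N0 [N1 [N2 [N3 [N4 [N5 [N6 _]]]]]]].
  unfold vtx.
  destruct (mod8_cases k) as [H|[H|[H|[H|[H|[H|[H|H]]]]]]]; rewrite H; simpl; congruence.
Qed.

Lemma vtx_straight (k : nat) : opp (vtx (1 + k)) (vtx k) (vtx (2 + k)).
Proof.
  assert (Hin : path_in_circuit c cl (vtx k) [vtx (1 + k); vtx (2 + k)])
    by (split; [apply vtx_in | repeat split; apply vtx_edge]).
  exact (proj1 (Hstraight _ _ Hin (conj (vtx_ne2 k) I))).
Qed.

(* Opposite vertices of the octagon are distinct: otherwise the two
   straight 2-paths from vtx (2 + k) to either side would have the same
   end, hence coincide by (VP2). *)
Lemma vtx_ne4 (k : nat) : vtx k <> vtx (4 + k).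
Proof.
  intros E.
  assert (Heq : [vtx (1 + k); vtx k] = [vtx (3 + k); vtx (4 + k)]).
  { apply (straight_unique 2 ltac:(lia) (vtx (2 + k))); simpl; auto.
    - split; simpl; [repeat split; apply vtx_adj | split; [apply vtx_ne2 | exact I]].
    - split; [apply vtx_straight | exact I].
    - split; simpl; [repeat split; apply adj_sym, vtx_adj | split; [|exact I]].
      intros E'. apply (vtx_ne2 k). auto.
    - split; [apply opp_sym, vtx_straight | exact I]. }
  injection Heq as E1 _. exact (vtx_ne2 (1 + k) E1).
Qed.

(* Vertices at odd distance lie in different bipartition classes. *)
Lemma vtx_ne_odd (k : nat) : vtx k <> vtx (1 + k) /\ vtx k <> vtx (3 + k).
Proof.
  pose proof (parity_flip (vtx_adj k)) as P1.
  pose proof (parity_flip (vtx_adj (1 + k))) as P2.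
  pose proof (parity_flip (vtx_adj (2 + k))) as P3.
  simpl in P1, P2, P3 |- *.
  split; intros E; rewrite <- E in *; tauto.
Qed.

Lemma vtx_ne (k d : nat) : 1 <= d <= 7 -> vtx k <> vtx (d + k).
Proof.
  intros Hd.
  assert (Hd' : d = 1 \/ d = 2 \/ d = 3 \/ d = 4 \/ d = 5 \/ d = 6 \/ d = 7) by lia.
  destruct Hd' as [->|[->|[->|[->|[->|[->| ->]]]]]].
  - apply vtx_ne_odd.
  - apply vtx_ne2.
  - apply vtx_ne_odd.
  - apply vtx_ne4.
  - rewrite (vtx_mod k (3 + (5 + k))) by mod8_lia.
    intros E. exact (proj2 (vtx_ne_odd (5 + k)) (eq_sym E)).
  - rewrite (vtx_mod k (2 + (6 + k))) by mod8_lia.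
    intros E. exact (vtx_ne2 (6 + k) (eq_sym E)).
  - rewrite (vtx_mod k (1 + (7 + k))) by mod8_lia.
    intros E. exact (proj1 (vtx_ne_odd (7 + k)) (eq_sym E)).
Qed.

Lemma vtx_inj (i j : nat) : vtx i = vtx j -> i mod 8 = j mod 8.
Proof.
  rewrite (vtx_mod i (i mod 8)), (vtx_mod j (j mod 8)) by (rewrite Nat.Div0.mod_mod; reflexivity).
  pose proof (Nat.mod_upper_bound i 8 ltac:(discriminate)).
  pose proof (Nat.mod_upper_bound j 8 ltac:(discriminate)).
  intros E. destruct (lt_eq_lt_dec (i mod 8) (j mod 8)) as [[Hlt | Heq] | Hlt]; auto; exfalso.
  - apply (vtx_ne (i mod 8) (j mod 8 - i mod 8)); [lia|].
    now replace (j mod 8 - i mod 8 + i mod 8) with (j mod 8) by lia.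
  - apply (vtx_ne (j mod 8) (i mod 8 - j mod 8)); [lia|].
    now replace (i mod 8 - j mod 8 + j mod 8) with (i mod 8) by lia.
Qed.

Lemma circ_vertex_vtx {u : V} : circ_vertex c cl u -> exists j, u = vtx j.
Proof.
  unfold circ_vertex. simpl.
  intros H; repeat destruct H as [H|H]; try contradiction; subst u;
    first [exists 0; reflexivity | exists 1; reflexivity | exists 2; reflexivity
          | exists 3; reflexivity | exists 4; reflexivity | exists 5; reflexivity
          | exists 6; reflexivity | exists 7; reflexivity].
Qed.

Lemma circ_edge_vtx {u w : V} :
  circ_edge c cl u w ->
  exists j, (u = vtx j /\ w = vtx (1 + j)) \/ (w = vtx j /\ u = vtx (1 + j)).
Proof.
  unfold circ_edge. simpl.
  intros [H|H]; repeat destruct H as [H|H]; try contradiction; injection H as <- <-;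
    first [ exists 0; now left | exists 0; now right | exists 1; now left | exists 1; now right
          | exists 2; now left | exists 2; now right | exists 3; now left | exists 3; now right
          | exists 4; now left | exists 4; now right | exists 5; now left | exists 5; now right
          | exists 6; now left | exists 6; now right | exists 7; now left | exists 7; now right ].
Qed.

Lemma circ_neighbour {k : nat} {u : V} :
  circ_edge c cl (vtx k) u -> u = vtx (1 + k) \/ u = vtx (7 + k).
Proof.
  intros H. destruct (circ_edge_vtx H) as [j [[E1 E2] | [E1 E2]]]; subst u.
  - left. apply vtx_inj in E1. apply vtx_mod. mod8_lia.
  - right. apply vtx_inj in E2. apply vtx_mod. mod8_lia.
Qed.

(* A walk in the circuit without backtracking keeps its direction e
   (e = 1: forwards, e = 7: backwards). *)
Lemma circ_continue {k e : nat} {u : V} :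
  e = 1 \/ e = 7 -> circ_edge c cl (vtx (e + k)) u -> u <> vtx k -> u = vtx (e + (e + k)).
Proof.
  intros He H Hback.
  destruct (circ_neighbour H) as [-> | ->]; destruct He as [-> | ->]; try reflexivity;
    exfalso; apply Hback, vtx_mod; mod8_lia.
Qed.

Lemma forward_arc (k : nat) :
  is_path adj (vtx k) [vtx (1 + k); vtx (2 + k); vtx (3 + k); vtx (4 + k)] /\
  straight opp (vtx k) [vtx (1 + k); vtx (2 + k); vtx (3 + k); vtx (4 + k)].
Proof.
  split; [split|]; simpl; repeat split; try apply vtx_adj; try apply vtx_ne2; try apply vtx_straight.
Qed.

Lemma backward_arc (k : nat) :
  is_path adj (vtx (4 + k)) [vtx (3 + k); vtx (2 + k); vtx (1 + k); vtx k] /\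
  straight opp (vtx (4 + k)) [vtx (3 + k); vtx (2 + k); vtx (1 + k); vtx k].
Proof.
  split; [split|]; simpl; repeat split; try (apply adj_sym, vtx_adj);
    try (apply opp_sym, vtx_straight); intros E; symmetry in E; revert E; apply vtx_ne2.
Qed.

(* A non-backtracking 5-path z M p L a N inside the octagon runs around it
   in one direction, so the remaining three edges form a straight 4-path
   from a back to z. *)
Lemma octagon_closes (z M p L a N : V) :
  path_in_circuit c cl z [M; p; L; a; N] -> nobacktrack z [M; p; L; a; N] ->
  exists q K, is_path adj a [N; q; K; z] /\ straight opp a [N; q; K; z].
Proof.
  intros [Hz Hch] Hnb. simpl in Hch, Hnb.
  destruct Hch as [C1 [C2 [C3 [C4 [C5 _]]]]].
  destruct Hnb as [B1 [B2 [B3 [B4 _]]]].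
  destruct (circ_vertex_vtx Hz) as [i ->].
  assert (Hdir : exists e, (e = 1 \/ e = 7) /\ M = vtx (e + i))
    by (destruct (circ_neighbour C1); [exists 1 | exists 7]; auto).
  destruct Hdir as [e [He ->]].
  pose proof (circ_continue He C2 (not_eq_sym B1)) as Ep; subst p.
  pose proof (circ_continue He C3 (not_eq_sym B2)) as EL; subst L.
  pose proof (circ_continue He C4 (not_eq_sym B3)) as Ea; subst a.
  pose proof (circ_continue He C5 (not_eq_sym B4)) as EN; subst N.
  destruct He as [-> | ->].
  - exists (vtx (6 + i)), (vtx (7 + i)).
    rewrite (vtx_mod i (4 + (4 + i))) by mod8_lia. exact (forward_arc (4 + i)).
  - exists (vtx (2 + i)), (vtx (1 + i)).
    rewrite (vtx_mod (7 + (7 + (7 + (7 + i)))) (4 + i)) by mod8_lia.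
    rewrite (vtx_mod (7 + (7 + (7 + (7 + (7 + i))))) (3 + i)) by mod8_lia.
    apply backward_arc.
Qed.

End StraightOctagon.

Lemma straight_octagon_arc {c : V} {cl : list V} {z M p L a N : V} :
  closed_path adj 8 c cl -> straight_circuit opp c cl ->
  path_in_circuit c cl z [M; p; L; a; N] -> nobacktrack z [M; p; L; a; N] ->
  exists q K, is_path adj a [N; q; K; z] /\ straight opp a [N; q; K; z].
Proof.
  intros [Hpath [Hlen [_ Hlast]]].
  destruct cl as [|v1 [|v2 [|v3 [|v4 [|v5 [|v6 [|v7 [|v8 [|]]]]]]]]]; simpl in Hlen; try lia.
  simpl in Hlast. subst v8.
  intros Hsc. exact (octagon_closes _ _ _ _ _ _ _ _ Hpath Hsc z M p L a N).
Qed.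

Hypothesis Hg : green adj opp pt.

(* In a green quadrangle a root a x p y z starting at a point a is just a
   non-backtracking 4-path whose middle vertex p sees x and y opposite:
   straightness at the lines x and y is automatic. *)
Definition root4 (a x p y z : V) : Prop :=
  adj a x /\ adj x p /\ adj p y /\ adj y z /\ a <> p /\ p <> z /\ opp p x y.

Definition collinear (a c : V) : Prop := exists X, adj a X /\ adj X c.

Lemma root4_rev {a x p y z : V} : root4 a x p y z -> root4 z y p x a.
Proof. unfold root4. intuition (auto using adj_sym, opp_sym). Qed.

Lemma root4_types {a x p y z : V} :
  pt a -> root4 a x p y z -> ~ pt x /\ pt p /\ ~ pt y /\ pt z.
Proof.
  intros Ha [H1 [H2 [H3 [H4 _]]]].
  pose proof (parity_flip H1). pose proof (parity_flip H2).
  pose proof (parity_flip H3). pose proof (parity_flip H4). tauto.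
Qed.

Lemma root4_opposite {a x p y z : V} :
  pt a -> root4 a x p y z -> opposite adj opp 4 a z.
Proof.
  intros Ha Hr. pose proof (root4_types Ha Hr) as [Px [_ [Py _]]].
  destruct Hr as [H1 [H2 [H3 [H4 [Hap [Hpz Hopp]]]]]].
  assert (Hxy : x <> y) by (intros ->; exact (opp_irrefl Hopp)).
  exists [x; p; y; z]. simpl. repeat split; auto; apply Hg; auto using adj_sym.
Qed.

Lemma opposite_root4 {a z : V} : opposite adj opp 4 a z -> exists x p y, root4 a x p y z.
Proof.
  intros [l [[Hch Hnb] [Hlen [Hst Hlast]]]].
  destruct l as [|x [|p [|y [|z' [|]]]]]; simpl in *; try lia.
  subst z'. exists x, p, y. unfold root4. intuition.
Qed.

(* Two distinct points p, q have at most one common neighbour: the two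
   2-paths through common neighbours are straight (lines are green), so
   they coincide by (VP2). *)
Lemma common_line_unique {p q x y : V} :
  pt p -> p <> q -> adj p x -> adj x q -> adj p y -> adj y q -> x = y.
Proof.
  intros Hp Hpq H1 H2 H3 H4.
  assert (Px : ~ pt x) by (apply (bipartite_flip H1); auto).
  assert (Py : ~ pt y) by (apply (bipartite_flip H3); auto).
  assert (E : [y; q] = [x; q]).
  { apply (straight_unique 2 ltac:(lia) p [x; q]); simpl; auto;
      repeat split; auto; apply Hg; auto using adj_sym. }
  injection E; auto.
Qed.

(* The straight 5-path z M p L a N lies in a
   straight 8-circuit (VP3), whose last three edges close it up. *)
Lemma root4_turn_opposite {a L p M z N : V} :
  pt a -> root4 a L p M z -> opp a L N -> exists q K, root4 a N q K z.
Proof.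
  intros Ha Hr HLN. pose proof (root4_types Ha Hr) as [PL [_ [PM _]]].
  destruct Hr as [H1 [H2 [H3 [H4 [Hap [Hpz Hopp]]]]]].
  destruct (opp_adj HLN) as [_ HaN].
  assert (Hpath : is_path adj z [M; p; L; a; N]).
  { split; simpl; repeat split; auto using adj_sym; try congruence;
      intros ->; eapply opp_irrefl; eauto. }
  assert (Hst : straight opp z [M; p; L; a; N]).
  { simpl; repeat split; auto using opp_sym; apply Hg; auto using adj_sym; congruence. }
  destruct (straight_in_circuit z _ Hpath eq_refl Hst) as [c [cl [Hcl [Hsc Hin]]]].
  destruct (straight_octagon_arc Hcl Hsc Hin (proj2 Hpath)) as [q [K [[Hch Hnb] Hst']]].
  exists q, K. simpl in Hch, Hnb, Hst'. unfold root4. intuition.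
Qed.

(* By 2-plumpness, any line N through a is opposite at a to a line that is
   opposite to L; so two rotations reach N. *)
Lemma root4_turn {a L p M z N : V} :
  pt a -> root4 a L p M z -> adj a N -> exists q K, root4 a N q K z.
Proof.
  intros Ha Hr HaN.
  destruct (common_opposite (proj1 Hr) HaN) as [N' [_ [HL HN]]].
  destruct (root4_turn_opposite Ha Hr (opp_sym HL)) as [q [K Hr']].
  exact (root4_turn_opposite Ha Hr' HN).
Qed.

Lemma no_root_to_self {a x p y : V} : pt a -> ~ root4 a x p y a.
Proof.
  intros Ha Hr. pose proof (root4_types Ha Hr) as [_ [Pp _]].
  destruct Hr as [H1 [H2 [H3 [H4 [Hap [_ Hopp]]]]]].
  assert (x = y) by (apply (common_line_unique Pp (not_eq_sym Hap)); auto using adj_sym).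
  subst. exact (opp_irrefl Hopp).
Qed.

(* Opposite points are not collinear: rotate the reversed root to start
   with the common line X; then p and a would have two common lines. *)
Lemma opposite_not_collinear {a L p M z : V} : pt a -> root4 a L p M z -> ~ collinear a z.
Proof.
  intros Ha Hr [X [HaX HXz]]. pose proof (root4_types Ha Hr) as [_ [_ [_ Pz]]].
  destruct (root4_turn Pz (root4_rev Hr) (adj_sym HXz)) as [q [K Hr']].
  pose proof (root4_types Pz Hr') as [_ [Pq _]].
  destruct Hr' as [H1 [H2 [H3 [H4 [_ [Hqa Hopp]]]]]].
  assert (X = K) by (apply (common_line_unique Pq Hqa); auto using adj_sym).
  subst. exact (opp_irrefl Hopp).
Qed.

Lemma root4_extend {a L p : V} : adj a L -> adj L p -> a <> p -> exists M z, root4 a L p M z.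
Proof.
  intros HaL HLp Hap.
  destruct (opposite_neighbour (adj_sym HLp)) as [M [HpM HML]].
  destruct (opposite_neighbour (adj_sym HpM)) as [z [HMz Hzp]].
  exists M, z. unfold root4. repeat split; auto using opp_sym.
  intros ->. exact (opp_irrefl Hzp).
Qed.

(* A weed (a, x, b, y, c), made explicit: its only non-straight vertex is
   the middle point b, and distance 4 between the points a, c means that
   they are distinct and not collinear. *)
Definition weed_form (a x b y c : V) : Prop :=
  pt a /\ adj a x /\ adj x b /\ adj b y /\ adj y c /\
  a <> b /\ b <> c /\ a <> c /\ ~ opp b x y /\ ~ collinear a c.

Lemma weed_form_types {a x b y c : V} : weed_form a x b y c -> pt b /\ pt c.
Proof.
  intros [Ha [H1 [H2 [H3 [H4 _]]]]].
  pose proof (parity_flip H1). pose proof (parity_flip H2).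
  pose proof (parity_flip H3). pose proof (parity_flip H4). tauto.
Qed.

Lemma weed_form_rev {a x b y c : V} : weed_form a x b y c -> weed_form c y b x a.
Proof.
  intros HW. pose proof (weed_form_types HW) as [_ Pc].
  destruct HW as [_ [H1 [H2 [H3 [H4 [Hab [Hbc [Hac [Hopp Hcol]]]]]]]]].
  unfold weed_form. repeat split; auto using adj_sym; try congruence.
  - intros E. exact (Hopp (opp_sym E)).
  - intros [X [HcX HXa]]. exact (Hcol (ex_intro _ X (conj (adj_sym HXa) (adj_sym HcX)))).
Qed.

Lemma points_far_apart {a c : V} :
  pt a -> pt c -> a <> c -> ~ collinear a c ->
  forall l, chain adj a l -> last l a = c -> 4 <= length l.
Proof.
  intros Ha Hc Hac Hcol l Hch Hl.
  destruct l as [|u1 [|u2 [|u3 [|u4 l]]]]; simpl in *; try lia; subst.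
  - contradiction.
  - destruct Hch as [H1 _]. pose proof (parity_flip H1). tauto.
  - exfalso. apply Hcol. exists u1. tauto.
  - destruct Hch as [H1 [H2 [H3 _]]].
    pose proof (parity_flip H1). pose proof (parity_flip H2). pose proof (parity_flip H3). tauto.
Qed.

Lemma weed_iff (a x b y c : V) : weed adj opp pt a x b y c <-> weed_form a x b y c.
Proof.
  split.
  - intros [[Hch Hnb] [Hns [Ha [Pb [Pc [_ Hmin]]]]]]. simpl in Hch, Hnb.
    destruct Hch as [H1 [H2 [H3 [H4 _]]]]. destruct Hnb as [Nab [Nxy [Nbc _]]].
    unfold weed_form. repeat split; auto.
    + intros <-. specialize (Hmin [] I eq_refl). simpl in Hmin. lia.
    + intros Hopp. apply Hns. simpl. repeat split; auto; apply Hg; auto using adj_sym.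
      * apply (bipartite_flip H1); auto.
      * apply (parity_flip H4); auto.
    + intros [X [HaX HXc]].
      specialize (Hmin [X; c] (conj HaX (conj HXc I)) eq_refl). simpl in Hmin. lia.
  - intros HW. pose proof (weed_form_types HW) as [Pb Pc].
    destruct HW as [Ha [H1 [H2 [H3 [H4 [Hab [Hbc [Hac [Hopp Hcol]]]]]]]]].
    refine (conj (conj _ _) (conj _ (conj Ha (conj Pb (conj Pc (conj _ _)))))).
    + simpl. auto.
    + simpl. repeat split; auto.
      intros ->. exact (Hcol (ex_intro _ y (conj H1 H4))).
    + simpl. intros [_ [Hbxy _]]. contradiction.
    + exists [x; b; y; c]. simpl. repeat split; auto.
    + exact (points_far_apart Ha Pc Hac Hcol).
Qed.

Lemma Gamma2_point {a z : V} : pt a -> (dist_eq adj z a 2 <-> z <> a /\ collinear z a).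
Proof.
  intros Ha. split.
  - intros [[l [Hch [Hl Hlen]]] Hmin]. split.
    + intros ->. specialize (Hmin [] I eq_refl). simpl in Hmin. lia.
    + destruct l as [|u1 [|u2 [|]]]; simpl in *; try lia. subst. exists u1. tauto.
  - intros [Hza [X [HzX HXa]]]. split.
    + exists [X; a]. simpl. auto.
    + intros l Hch Hl. destruct l as [|u1 [|u2 l]]; simpl in *; try lia; subst.
      * contradiction.
      * destruct Hch as [H _].
        pose proof (parity_flip HzX). pose proof (parity_flip HXa). pose proof (parity_flip H). tauto.
Qed.

(* Rotating a root a L p M c to start
   with x gives a root a x q K c; if q = b, then K = y and b would see x, y
   opposite; otherwise b and c would be opposite yet collinear through y. *)
Lemma weed_ends_not_opposite {a x b y c L p M : V} :
  weed_form a x b y c -> ~ root4 a L p M c.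
Proof.
  intros HW Hr. pose proof (weed_form_types HW) as [Pb Pc].
  destruct HW as [Ha [H1 [H2 [H3 [H4 [Hab [Hbc [Hac [Hopp Hcol]]]]]]]]].
  destruct (root4_turn Ha Hr H1) as [q [K [G1 [G2 [G3 [G4 [Haq [Hqc Hq]]]]]]]].
  destruct (classic (q = b)) as [-> | Hqb].
  - assert (K = y) by (apply (common_line_unique Pb Hbc); auto). subst. contradiction.
  - apply (@opposite_not_collinear b x q K c Pb).
    + unfold root4. repeat split; auto using adj_sym.
    + exists y. auto.
Qed.

Lemma weed_turn {a x b y c N d : V} :
  weed_form a x b y c -> opp a N x -> adj N d -> d <> a -> exists Y, weed_form a N d Y c.
Proof.
  intros HW HNx HNd Hda. pose proof (weed_form_types HW) as [Pb Pc].
  pose proof HW as [Ha [H1 [H2 [H3 [H4 [Hab [Hbc [Hac [Hopp Hcol]]]]]]]]].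
  destruct (opp_adj HNx) as [HaN _].
  assert (Hr : root4 b x a N d)
    by (unfold root4; repeat split; auto using adj_sym, opp_sym).
  destruct (root4_turn Pb Hr H3) as [q [K [G1 [G2 [G3 [G4 [Hbq [Hqd Hq]]]]]]]].
  assert (Pd : pt d) by (apply (parity_flip HNd), (bipartite_flip HaN), Ha).
  destruct (classic (q = c)) as [-> | Hqc].
  - exists K. unfold weed_form. repeat split; auto using adj_sym.
    intros HdNK. apply (weed_ends_not_opposite (L := N) (p := d) (M := K) HW).
    unfold root4. repeat split; auto using adj_sym.
  - assert (Hr' : root4 d K q y c)
      by (unfold root4; repeat split; auto using adj_sym, opp_sym).
    destruct (root4_turn Pd Hr' (adj_sym HNd)) as [r [N' [F1 [F2 [F3 [F4 [Hdr [Hrc Hr'']]]]]]]].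
    exfalso. destruct (classic (r = a)) as [-> | Hra].
    + exact (Hcol (ex_intro _ N' (conj F3 F4))).
    + apply (weed_ends_not_opposite (L := N) (p := r) (M := N') HW).
      unfold root4. repeat split; auto.
Qed.

(* A root a x q K z through the first line x of a weed (a, x, b, y, c) with
   q <> b yields a root from c to z: turn the root b x q K z towards y. *)
Lemma weed_root_transfer {a x b y c q K z : V} :
  weed_form a x b y c -> root4 a x q K z -> q <> b -> exists L p M, root4 c L p M z.
Proof.
  intros HW Hr Hqb. pose proof (weed_form_types HW) as [Pb Pc].
  pose proof HW as [Ha [H1 [H2 [H3 [H4 [Hab [Hbc [Hac [Hopp Hcol]]]]]]]]].
  pose proof (root4_types Ha Hr) as [_ [_ [_ Pz]]].
  pose proof Hr as [G1 [G2 [G3 [G4 [Haq [Hqz Hq]]]]]].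
  assert (Hrb : root4 b x q K z) by (unfold root4; repeat split; auto using adj_sym).
  destruct (root4_turn Pb Hrb H3) as [q' [K' [F1 [F2 [F3 [F4 [Hbq' [Hq'z Hq']]]]]]]].
  destruct (classic (c = q')) as [<- | Hcq'].
  - exfalso.
    destruct (root4_turn Pz (root4_rev Hr) (adj_sym F4)) as [r [N' [E1 [E2 [E3 [E4 [Hzr [Hra Hr']]]]]]]].
    destruct (classic (r = c)) as [-> | Hrc].
    + exact (Hcol (ex_intro _ N' (conj (adj_sym E4) (adj_sym E3)))).
    + apply (weed_ends_not_opposite (L := N') (p := r) (M := K') HW).
      unfold root4. repeat split; auto using adj_sym, opp_sym.
  - exists y, q', K'. unfold root4. repeat split; auto using adj_sym.
Qed.

(* First turn the root a ... z to start with a line N opposite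
   x, then turn the weed to pass through N and a point d avoiding the root. *)
Lemma weed_opposite_transfer {a x b y c z : V} :
  weed_form a x b y c -> opposite adj opp 4 a z -> opposite adj opp 4 c z.
Proof.
  intros HW Haz. pose proof (weed_form_types HW) as [_ Pc].
  pose proof HW as [Ha [H1 _]].
  destruct (opposite_root4 Haz) as [L [p [M Hr]]].
  destruct (opposite_neighbour H1) as [N [HaN HNx]].
  destruct (root4_turn Ha Hr HaN) as [q [K Hr']].
  destruct (common_opposite (adj_sym HaN) (proj1 (proj2 Hr'))) as [d [HNd [Hda Hdq]]].
  assert (Hd : d <> a) by (intros ->; exact (opp_irrefl Hda)).
  assert (Hq : q <> d) by (intros ->; exact (opp_irrefl Hdq)).
  destruct (weed_turn HW HNx HNd Hd) as [Y HW'].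
  destruct (weed_root_transfer HW' Hr' Hq) as [L' [p' [M' Hrc]]].
  exact (root4_opposite Pc Hrc).
Qed.

(* Γ_2 is transferred along a weed: if z is collinear with a (through Y),
   turn the weed twice so that its first line becomes Y; then z lies on
   the weed and is collinear with c. *)
Lemma weed_Gamma2_transfer {a x b y c z : V} :
  weed_form a x b y c -> dist_eq adj z a 2 -> dist_eq adj z c 2.
Proof.
  intros HW Hza. pose proof (weed_form_types HW) as [_ Pc].
  pose proof HW as [Ha [H1 _]].
  destruct (proj1 (Gamma2_point Ha) Hza) as [Hne [Y [HzY HYa]]].
  destruct (common_opposite H1 (adj_sym HYa)) as [N [HaN [HNx HNY]]].
  destruct (opposite_neighbour (adj_sym HaN)) as [d [HNd Hda]].
  assert (Hd : d <> a) by (intros ->; exact (opp_irrefl Hda)).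
  destruct (weed_turn HW HNx HNd Hd) as [Y1 HW1].
  destruct (weed_turn HW1 (opp_sym HNY) (adj_sym HzY) Hne) as [Y2 HW2].
  destruct HW2 as [_ [_ [_ [HzY2 [HY2c [_ [Hzc _]]]]]]].
  apply (Gamma2_point Pc). split; [exact Hzc | exists Y2; auto].
Qed.

(* Distinct points with the same opposites are not collinear: a root
   a X b M w through a common line X would make w opposite b although w is
   collinear with b through M. *)
Lemma same_opposites_not_collinear {a b : V} :
  pt a -> pt b -> a <> b ->
  (forall z, opposite adj opp 4 a z <-> opposite adj opp 4 b z) -> ~ collinear a b.
Proof.
  intros Ha Hb Hab Hop [X [HaX HXb]].
  destruct (root4_extend HaX HXb Hab) as [M [w Hr]].
  destruct (opposite_root4 (proj1 (Hop w) (root4_opposite Ha Hr))) as [x' [p' [y' Hrb]]].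
  destruct Hr as [_ [_ [HbM [HMw _]]]].
  exact (opposite_not_collinear Hb Hrb (ex_intro _ M (conj HbM HMw))).
Qed.

(* Take a root
   a L p M z; as z is also opposite b, turning a root from z to b gives a
   root z M r N b.  If r = p, then (a, L, p, N, b) is a weed; otherwise p
   would be opposite b, hence opposite a, although p is collinear with a. *)
Lemma simeq_of_same_opposites {a b : V} :
  pt a -> pt b ->
  (forall z, opposite adj opp 4 a z <-> opposite adj opp 4 b z) -> simeq adj opp pt a b.
Proof.
  intros Ha Hb Hop.
  destruct (classic (a = b)) as [Hab | Hab]; [left; exact Hab | right].
  pose proof (same_opposites_not_collinear Ha Hb Hab Hop) as Hcol.
  destruct (exists_neighbour a) as [L HaL].
  destruct (opposite_neighbour (adj_sym HaL)) as [p [HLp HLpa]].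
  assert (Hap : a <> p) by (intros ->; exact (opp_irrefl HLpa)).
  destruct (root4_extend HaL HLp Hap) as [M [z Hr]].
  pose proof (root4_types Ha Hr) as [_ [Pp [_ Pz]]].
  destruct (opposite_root4 (proj1 (Hop z) (root4_opposite Ha Hr))) as [L2 [p2 [M2 Hr2]]].
  pose proof Hr as [_ [_ [HpM [HMz _]]]].
  destruct (root4_turn Pz (root4_rev Hr2) (adj_sym HMz))
    as [r [N [_ [HMr [HrN [HNb [_ [Hrb Hr']]]]]]]].
  destruct (classic (r = p)) as [-> | Hrp].
  - exists L, p, N. apply weed_iff. unfold weed_form. repeat split; auto.
    intros HLN. assert (Hrab : root4 a L p N b) by (unfold root4; repeat split; auto).
    destruct (opposite_root4 (proj1 (Hop b) (root4_opposite Ha Hrab))) as [x' [p' [y' Hbb]]].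
    exact (no_root_to_self Hb Hbb).
  - exfalso.
    assert (Hrbp : root4 b N r M p) by (unfold root4; repeat split; auto using adj_sym, opp_sym).
    destruct (opposite_root4 (proj2 (Hop p) (root4_opposite Hb Hrbp))) as [x' [p' [y' Hrap]]].
    exact (opposite_not_collinear Ha Hrap (ex_intro _ L (conj HaL HLp))).
Qed.

Lemma same_opposites_of_simeq {a b : V} :
  simeq adj opp pt a b -> forall z, opposite adj opp 4 a z <-> opposite adj opp 4 b z.
Proof.
  intros [<- | [x [m [y Hw]]]] z; [reflexivity|].
  apply weed_iff in Hw.
  split; [apply (weed_opposite_transfer Hw) | apply (weed_opposite_transfer (weed_form_rev Hw))].
Qed.

Lemma Gamma2_of_simeq {a b : V} :
  simeq adj opp pt a b -> forall z, Gamma_m adj 2 a z <-> Gamma_m adj 2 b z.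
Proof.
  intros [<- | [x [m [y Hw]]]] z; [reflexivity|].
  apply weed_iff in Hw.
  split; [apply (weed_Gamma2_transfer Hw) | apply (weed_Gamma2_transfer (weed_form_rev Hw))].
Qed.

End Quadrangle.

(* Part (i) characterises the weed relation by the equality of opposite
   sets, which is an equivalence relation. *)
Theorem proposition4p6 (V : Type) (adj : V -> V -> Prop) (opp : V -> V -> V -> Prop)
  (pt : V -> Prop)
  (HQ : veldkamp_quadrangle adj opp pt) (Hgreen : green adj opp pt) :
  (forall a b, pt a -> pt b ->
     (simeq adj opp pt a b <-> (forall z, opposite adj opp 4 a z <-> opposite adj opp 4 b z)) /\
     (simeq adj opp pt a b -> forall z, Gamma_m adj 2 a z <-> Gamma_m adj 2 b z)) /\
  (forall a, pt a -> simeq adj opp pt a a) /\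
  (forall a b, pt a -> pt b -> simeq adj opp pt a b -> simeq adj opp pt b a) /\
  (forall a b c, pt a -> pt b -> pt c ->
     simeq adj opp pt a b -> simeq adj opp pt b c -> simeq adj opp pt a c).
Proof.
  pose proof (@same_opposites_of_simeq _ _ _ _ HQ Hgreen) as Hop.
  pose proof (@simeq_of_same_opposites _ _ _ _ HQ Hgreen) as Hsim.
  split; [|split; [|split]].
  - intros a b Ha Hb. split; [split|].
    + apply Hop.
    + apply Hsim; assumption.
    + apply (Gamma2_of_simeq HQ Hgreen).
  - intros a _. left. reflexivity.
  - intros a b Ha Hb Hab. apply Hsim; [assumption | assumption |].
    intros z. symmetry. apply Hop, Hab.
  - intros a b c Ha Hb Hc Hab Hbc. apply Hsim; [assumption | assumption |].
    intros z. rewrite (Hop a b Hab z). apply Hop, Hbc.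
Qed.
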